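(* Every transition diagram satisfying conditions (1)–(5) below has at least three and at most six short loops.
   Context: A transition diagram is a relation $\to$ on cells $(i,j)$, $i,j\in\{1,2,3\}$, such that for every $j$ and $i\ne i'$ exactly one of $(i,j)\to(i',j)$, $(i',j)\to(i,j)$ holds, for every $i$ and $j\ne j'$ exactly one of $(i,j)\to(i,j')$, $(i,j')\to(i,j)$ holds, and no other pairs are related. Conditions: (1) no row has horizontal arrows forming a directed 3-cycle and no column has vertical arrows forming a directed 3-cycle; (2) there are no $i\ne i'$ with $(i,j)\to(i',j)$ for all $j$, and no $j\ne j'$ with $(i,j)\to(i,j')$ for all $i$; (3) no cell all of whose four incident arrows point into it; (4) no cell all of whose four incident arrows point out of it; (5) no alternating cycle, i.e. no sequence of cells $(i_0,j_0),\dots,(i_n,j_n)=(i_0,j_0)$, consecutive ones differing in exactly one coordinate, which follows the arrows on all vertical steps and goes against them on all horizontal steps, or vice versa. A short loop is a directed loop $(i,j)\to(i',j)\to(i',j')\to(i,j')\to(i,j)$ with $i\ne i'$, $j\ne j'$; the number of short loops is the number of the nine $2\times2$ blocks $\{i,i'\}\times\{j,j'\}$ whose four arrows form such a loop. *)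

From mathcomp Require Import all_boot.
Set Implicit Arguments. Unset Strict Implicit. Unset Printing Implicit Defensive.

(* Cells (i,j) with i (row), j (column) in {1,2,3}, encoded as 'I_3 * 'I_3. *)
Definition cell := ('I_3 * 'I_3)%type.

Definition vstep (c d : cell) : bool := (c.2 == d.2) && (c.1 != d.1).
Definition hstep (c d : cell) : bool := (c.1 == d.1) && (c.2 != d.2).
Definition adjacent (c d : cell) : bool := vstep c d || hstep c d.

Definition transition_diagram (R : rel cell) : Prop :=
  (forall (j i i' : 'I_3), i != i' -> R (i, j) (i', j) = ~~ R (i', j) (i, j)) /\
  (forall (i j j' : 'I_3), j != j' -> R (i, j) (i, j') = ~~ R (i, j') (i, j)) /\
  (forall c d : cell, R c d -> adjacent c d).

Definition cond1 (R : rel cell) : Prop :=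
  (~ exists (i j1 j2 j3 : 'I_3),
       [&& j1 != j2, j2 != j3, j1 != j3,
           R (i, j1) (i, j2), R (i, j2) (i, j3) & R (i, j3) (i, j1)]) /\
  (~ exists (j i1 i2 i3 : 'I_3),
       [&& i1 != i2, i2 != i3, i1 != i3,
           R (i1, j) (i2, j), R (i2, j) (i3, j) & R (i3, j) (i1, j)]).

Definition cond2 (R : rel cell) : Prop :=
  (~ exists (i i' : 'I_3), i != i' /\ forall j : 'I_3, R (i, j) (i', j)) /\
  (~ exists (j j' : 'I_3), j != j' /\ forall i : 'I_3, R (i, j) (i, j')).

Definition cond3 (R : rel cell) : Prop :=
  ~ exists c : cell, forall d : cell, adjacent c d -> R d c.

Definition cond4 (R : rel cell) : Prop :=
  ~ exists c : cell, forall d : cell, adjacent c d -> R c d.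

Definition alt_vh (R : rel cell) : rel cell :=
  fun c d => (vstep c d && R c d) || (hstep c d && R d c).
Definition alt_hv (R : rel cell) : rel cell :=
  fun c d => (hstep c d && R c d) || (vstep c d && R d c).

Definition alternating_cycle (R : rel cell) : Prop :=
  exists (c0 : cell) (s : seq cell),
    [/\ s != [::], last c0 s = c0 & path (alt_vh R) c0 s || path (alt_hv R) c0 s].

Definition cond5 (R : rel cell) : Prop := ~ alternating_cycle R.

Definition short_loop (R : rel cell) (i j i' j' : 'I_3) : bool :=
  [&& i != i', j != j',
      R (i, j) (i', j), R (i', j) (i', j'), R (i', j') (i, j') & R (i, j') (i, j)].

Definition block_loop (R : rel cell) (i i' j j' : 'I_3) : bool :=
  [|| short_loop R i j i' j', short_loop R i' j i j',
      short_loop R i j' i' j | short_loop R i' j' i j].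

Definition num_short_loops (R : rel cell) : nat :=
  #|[set q : 'I_3 * 'I_3 * 'I_3 * 'I_3 |
      [&& q.1.1.1 < q.1.1.2, q.1.2 < q.2 & block_loop R q.1.1.1 q.1.1.2 q.1.2 q.2]]|.

From mathcomp Require Import all_boot.
From Stdlib Require Import FunctionalExtensionality.

Set Implicit Arguments. Unset Strict Implicit. Unset Printing Implicit Defensive.

(* By (1) the arrows of each row and of each column form a linear order on
   three cells, so a diagram is determined by one of six orientations for
   each of its six lines.  The resulting 6^6 diagrams are checked by
   computation; the bound already holds for all of them that have neither
   a sink nor a source. *)

Definition o0 : 'I_3 := @Ordinal 3 0 isT.
Definition o1 : 'I_3 := @Ordinal 3 1 isT.
Definition o2 : 'I_3 := @Ordinal 3 2 isT.
Definition ords3 : seq 'I_3 := [:: o0; o1; o2].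

Lemma ord3P (i : 'I_3) : [\/ i = o0, i = o1 | i = o2].
Proof.
by case: i => [[|[|[|k]]] lt_k3] //; [constructor 1 | constructor 2 | constructor 3];
  apply: val_inj.
Qed.

Lemma mem_ords3 i : i \in ords3.
Proof. by case: (ord3P i) => ->. Qed.

Lemma nth_ords3 (i : 'I_3) : nth o0 ords3 i = i.
Proof. by case: (ord3P i) => ->. Qed.

Definition cells : seq cell := [seq (i, j) | i <- ords3, j <- ords3].

Fixpoint words (T : Type) (A : seq T) (n : nat) : seq (seq T) :=
  if n is n'.+1 then [seq a :: w | a <- A, w <- words A n'] else [:: [::]].

Lemma mem_words (T : eqType) (A : seq T) (s : seq T) :
  all (mem A) s -> s \in words A (size s).
Proof. by elim: s => [|a s IHs] //= /andP[Aa /IHs Ws]; apply: allpairs_f. Qed.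

Lemma card_set_count (T : finType) (P : pred T) (s : seq T) :
  uniq s -> (forall x, P x -> x \in s) -> #|[set x | P x]| = count P s.
Proof.
move=> s_uniq sP; rewrite -size_filter -(card_uniqP (filter_uniq P s_uniq)).
by apply: eq_card => x; rewrite in_set mem_filter; case Px: (P x); rewrite /= ?sP.
Qed.

Definition triple := (bool * bool * bool)%type.

Definition tournament_of (t : triple) : rel 'I_3 := fun x y =>
  let: (b01, b02, b12) := t in
  match nat_of_ord x, nat_of_ord y with
  | 0, 1 => b01 | 1, 0 => ~~ b01
  | 0, 2 => b02 | 2, 0 => ~~ b02
  | 1, 2 => b12 | 2, 1 => ~~ b12
  | _, _ => false
  end.

Definition upper_arrows (f : rel 'I_3) : triple := (f o0 o1, f o0 o2, f o1 o2).

(* The two missing triples orient [0 -> 1 -> 2 -> 0] and [0 -> 2 -> 1 -> 0]. *)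
Definition transitive_triples : seq triple :=
  [:: (true, true, true); (true, true, false); (true, false, false);
      (false, true, true); (false, false, true); (false, false, false)].

Section Tournament3.

Variable f : rel 'I_3.
Hypothesis f_tourn : forall x y, x != y -> f x y = ~~ f y x.

Lemma upper_arrowsK : irreflexive f -> tournament_of (upper_arrows f) =2 f.
Proof.
move=> f_irr x y; case: (ord3P x) => ->; case: (ord3P y) => ->;
  by rewrite /= ?f_irr ?(f_tourn (y := o0)) ?(f_tourn (y := o1)).
Qed.

Lemma upper_arrows_transitive :
  ~ (exists x y z, [&& x != y, y != z, x != z, f x y, f y z & f z x]) ->
  upper_arrows f \in transitive_triples.
Proof.
move=> no_cycle; rewrite /upper_arrows.
case f01: (f o0 o1); case f02: (f o0 o2); case f12: (f o1 o2) => //; case: no_cycle.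
- by exists o0, o1, o2; rewrite f01 f12 f_tourn // f02.
- by exists o0, o2, o1; rewrite f02 f_tourn // f12 f_tourn // f01.
Qed.

End Tournament3.

(* Indices are compared in [nat]: equality of ordinals is much slower in
   the VM. *)
Definition diagram (rows cols : seq triple) : rel cell := fun c d =>
  if c.1 == d.1 :> nat then tournament_of (nth (true, true, true) rows c.1) c.2 d.2
  else (c.2 == d.2 :> nat) && tournament_of (nth (true, true, true) cols c.2) c.1 d.1.

Definition row_triples (R : rel cell) : seq triple :=
  [seq upper_arrows (fun j j' => R (i, j) (i, j')) | i <- ords3].

Definition col_triples (R : rel cell) : seq triple :=
  [seq upper_arrows (fun i i' => R (i, j) (i', j)) | j <- ords3].

Section TransitionDiagram.

Variable R : rel cell.
Hypothesis R_diagram : transition_diagram R.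

Lemma transition_diagram_irr : irreflexive R.
Proof.
case: R_diagram => _ [_ R_adj] c; apply/negbTE/negP => /R_adj.
by rewrite /adjacent /vstep /hstep !eqxx !andbF.
Qed.

Lemma diagram_row_col_triples : R =2 diagram (row_triples R) (col_triples R).
Proof.
case: R_diagram => [R_vert [R_horiz R_adj]] [i j] [i' j'].
rewrite /diagram /= !val_eqE !(nth_map o0) // !nth_ords3.
have [<-|ne_i] := eqVneq i i'.
  by rewrite upper_arrowsK // => [x y|x]; [apply: R_horiz | apply: transition_diagram_irr].
have [<-|ne_j] := eqVneq j j'.
  by rewrite upper_arrowsK // => [x y|x]; [apply: R_vert | apply: transition_diagram_irr].
apply/negbTE/negP => /R_adj.
by rewrite /adjacent /vstep /hstep /= (negbTE ne_i) (negbTE ne_j).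
Qed.

Lemma transition_diagram_encoding :
  cond1 R ->
  exists2 rows, rows \in words transitive_triples 3 &
  exists2 cols, cols \in words transitive_triples 3 & R = diagram rows cols.
Proof.
case: R_diagram => R_vert [R_horiz _] [no_row_cycle no_col_cycle].
exists (row_triples R).
  apply: (mem_words (s := row_triples R)); apply/allP => _ /mapP[i _ ->].
  apply: upper_arrows_transitive => [x y|[x [y [z cyc]]]]; first exact: R_horiz.
  by apply: no_row_cycle; exists i, x, y, z.
exists (col_triples R).
  apply: (mem_words (s := col_triples R)); apply/allP => _ /mapP[j _ ->].
  apply: upper_arrows_transitive => [x y|[x [y [z cyc]]]]; first exact: R_vert.
  by apply: no_col_cycle; exists j, x, y, z.
by do 2![apply: functional_extensionality => ?]; apply: diagram_row_col_triples.
Qed.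

End TransitionDiagram.

Definition is_sink (R : rel cell) (c : cell) : bool :=
  all (fun i : 'I_3 => (i == c.1 :> nat) || R (i, c.2) c) ords3 &&
  all (fun j : 'I_3 => (j == c.2 :> nat) || R (c.1, j) c) ords3.

Definition has_sink (R : rel cell) : bool := has (is_sink R) cells.

Definition admissible (R : rel cell) : bool :=
  ~~ has_sink R && ~~ has_sink (fun c d => R d c).

Lemma cond3_has_sink R : cond3 R -> ~~ has_sink R.
Proof.
move=> no_sink; apply/hasPn => -[i j] _; apply/negP => /andP[/allP col_ij /allP row_ij].
apply: no_sink; exists (i, j) => -[i' j'] /orP[] /andP[/eqP /= <- ne_i].
  by have /orP[|//] := col_ij i' (mem_ords3 i'); rewrite val_eqE eq_sym (negbTE ne_i).
by have /orP[|//] := row_ij j' (mem_ords3 j'); rewrite val_eqE eq_sym (negbTE ne_i).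
Qed.

Lemma cond3_cond4_admissible R : cond3 R -> cond4 R -> admissible R.
Proof.
move=> /cond3_has_sink no_sink /(@cond3_has_sink (fun c d => R d c)) no_source.
by rewrite /admissible no_sink.
Qed.

Definition index_pairs : seq ('I_3 * 'I_3) := [:: (o0, o1); (o0, o2); (o1, o2)].

Definition blocks : seq ('I_3 * 'I_3 * 'I_3 * 'I_3) :=
  [seq (p, q.1, q.2) | p <- index_pairs, q <- index_pairs].

Definition short_loop_block (R : rel cell) (q : 'I_3 * 'I_3 * 'I_3 * 'I_3) : bool :=
  [&& q.1.1.1 < q.1.1.2, q.1.2 < q.2 & block_loop R q.1.1.1 q.1.1.2 q.1.2 q.2].

Lemma num_short_loopsE R : num_short_loops R = count (short_loop_block R) blocks.
Proof.
apply: card_set_count => [|[[[i i'] j] j'] /and3P[]]; first by [].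
by case: (ord3P i) => ->; case: (ord3P i') => ->; case: (ord3P j) => ->;
  case: (ord3P j') => ->.
Qed.

Lemma admissible_diagrams_short_loops :
  all (fun rows =>
    all (fun cols => 3 <= count (short_loop_block (diagram rows cols)) blocks <= 6)
      [seq cols <- words transitive_triples 3 | admissible (diagram rows cols)])
    (words transitive_triples 3).
Proof. vm_cast_no_check (erefl true). Qed.

Theorem mainTheorem6 (R : rel cell) :
  transition_diagram R -> cond1 R -> cond2 R -> cond3 R -> cond4 R -> cond5 R ->
  3 <= num_short_loops R <= 6.
Proof.
move=> R_diagram R_cond1 _ R_cond3 R_cond4 _.
have R_admissible := cond3_cond4_admissible R_cond3 R_cond4.
have [rows rows_ok [cols cols_ok R_eq]] := transition_diagram_encoding R_diagram R_cond1.
subst R; rewrite num_short_loopsE.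
have /allP/(_ _ rows_ok)/allP := admissible_diagrams_short_loops.
by apply; rewrite mem_filter R_admissible.
Qed.
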